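(* Let $(u_n)_{n \geq 1}$ be a virtual isometry. For $n \geq 1$ let $x_n := u_n(e_n)$, let $(f^{(n)}_k)_{1\le k\le n}$ be an orthonormal basis of $\mathbb{C}^n$ consisting of eigenvectors of $u_n$ with corresponding eigenvalues $(\lambda^{(n)}_k)_{1\le k\le n}$, let $P_n(z) := \det(z\,\mathrm{Id}_n - u_n)$, and write $x_{n+1} = \sum_{k=1}^n \mu^{(n)}_k f^{(n)}_k + \nu_n e_{n+1}$. Then for every $n \geq 1$ such that $x_{n+1} \neq e_{n+1}$, one has $\nu_n \neq 1$ and, for all $z \notin \{\lambda^{(n)}_1,\dots,\lambda^{(n)}_n\}$, $$P_{n+1}(z) = \frac{P_n(z)}{\overline{\nu_n} - 1}\left[(z - \nu_n)(\overline{\nu_n} - 1) - (z-1)\sum_{k=1}^n |\mu^{(n)}_k|^2 \frac{\lambda^{(n)}_k}{z - \lambda^{(n)}_k}\right].$$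
   Context: Let $(e_k)$ be the canonical basis of $\ell^2$; identify $\mathbb{C}^n$ with the span of $e_1,\dots,e_n$ (so $\mathbb{C}^n\subset\mathbb{C}^{n+1}$) and $U(n)$ with the unitary operators fixing every $e_k$, $k>n$. For $n\ge m\ge1$ and $u\in U(n)$, $\pi_{n,m}(u)$ is the unique $v\in U(m)$ such that the range of $u-v$ is contained in $(u-\mathrm{Id})(\mathrm{span}\{e_k:k>m\})$ (existence and uniqueness are known). A virtual isometry is a sequence $(u_n)_{n\ge1}$ with $u_n\in U(n)$ and $\pi_{n+1,n}(u_{n+1})=u_n$ for all $n\ge1$. *)

From HB Require Import structures.
From mathcomp Require Import all_boot all_order all_algebra.
From mathcomp Require Import reals complex.
Set Implicit Arguments. Unset Strict Implicit. Unset Printing Implicit Defensive.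
Import Order.TTheory GRing.Theory Num.Theory.
Local Open Scope ring_scope.
Local Open Scope sesquilinear_scope.

Definition Cx (R : realType) := complex.complex R.

(* Canonical embedding C^n ⊂ C^(n+1) (column vectors; e_(n+1) is the last index). *)
Definition extv {C : nzRingType} {n : nat} (x : 'cV[C]_n) : 'cV[C]_(n.+1) :=
  castmx (addn1 n, erefl 1%N) (col_mx x 0).

Definition extm {C : nzRingType} {n : nat} (u : 'M[C]_n) : 'M[C]_(n.+1) :=
  castmx (addn1 n, addn1 n) (block_mx u 0 0 1%:M).

(* e_k : the k-th canonical basis column vector of C^n (k : 'I_n, 0-based). *)
Definition evec {C : nzRingType} {n : nat} (k : 'I_n) : 'cV[C]_n := delta_mx k 0.

(* pi_{n+1,n}(w) = v (with w in U(n+1), v in U(n)), by its defining property: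
   range (w - v) ⊆ (w - Id)(span{e_k : k > n}).  Since w fixes e_k for k > n+1,
   the latter space is the line spanned by (w - Id) e_(n+1). *)
Definition proj_succ_is {C : nzRingType} {n : nat} (w : 'M[C]_(n.+1)) (v : 'M[C]_n) : Prop :=
  forall x : 'cV[C]_(n.+1), exists c : C,
    (w - extm v) *m x = c *: ((w - 1%:M) *m evec ord_max).

(* A virtual isometry: u n ∈ U(n) for all n >= 1 and pi_{n+1,n}(u (n+1)) = u n.
   (The component u 0 : 'M_0 is irrelevant.) *)
Definition virtual_isometry {R : realType} (u : forall n : nat, 'M[Cx R]_n) : Prop :=
  (forall n, (0 < n)%N -> u n \is unitarymx) /\
  (forall n, (0 < n)%N -> proj_succ_is (u n.+1) (u n)).

From HB Require Import structures.
From mathcomp Require Import all_boot all_order all_algebra.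
From mathcomp Require Import reals complex ring.
Import Order.TTheory GRing.Theory Num.Theory.
Local Open Scope ring_scope.
Local Open Scope sesquilinear_scope.
Set Implicit Arguments.
Unset Strict Implicit.
Unset Printing Implicit Defensive.

(* Put W = u_(n+1), V = u_n (+) 1, e = e_(n+1), x = W e and y = x - e.  The
   defining property of pi_(n+1,n) says that W - V has range in the line of y;
   pairing with x and using unitarity of W identifies the coefficient, giving
   (conj nu - 1) (W - V) = y y^* V.  In the orthonormal basis (f_k, e) this
   exhibits W as diag(lam, 1) plus a rank-one matrix, so det (z - W) is a
   bordered determinant whose Schur complement with respect to the invertible
   corner z - diag(lam) is the bracket of the formula.  Finally nu <> 1,
   since otherwise the unit vector x would equal e. *)

Section BlockDeterminants.
Variable R : comPzRingType.

Lemma det_block_schur m n (A A' : 'M[R]_m) (B : 'M_(m, n)) (C : 'M_(n, m)) (D : 'M_n) :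
  A *m A' = 1%:M ->
  \det (block_mx A B C D) = \det A * \det (D - C *m A' *m B).
Proof.
move=> AA'.
have -> : block_mx A B C D =
    block_mx A 0 C 1%:M *m block_mx 1%:M (A' *m B) 0 (D - C *m A' *m B).
  rewrite mulmx_block !(mulmx0, mul0mx, mulmx1, mul1mx, addr0, add0r).
  by rewrite mulmxA AA' mul1mx mulmxA addrC subrK.
by rewrite det_mulmx det_lblock det_ublock !det1 mulr1 mul1r.
Qed.

Lemma det_block_diag_sub_rank1 n (A A' : 'M[R]_n) (a b : R) (m : 'cV_n) (r : 'rV_n) :
  A *m A' = 1%:M ->
  \det (block_mx A 0 0 a%:M - col_mx m b%:M *m row_mx r 1%:M) =
  \det A * (a - b - a * (r *m A' *m m) 0 0).
Proof.
move=> AA'.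
(* Right multiplication by L clears the rank-one part of the top-left block,
   so no invertibility of the corner a is needed. *)
pose L := block_mx 1%:M 0 (- r) (1%:M : 'M_1).
have detL : \det L = 1 by rewrite det_lblock !det1 mulr1.
rewrite -[LHS]mulr1 -[X in _ * X]detL -det_mulmx mul_col_row mulmx1 opp_block_mx add_block_mx.
rewrite mulmx_block !(mulmx0, mul0mx, mulmx1, mul1mx, addr0, add0r, sub0r).
rewrite mulNmx mulmxN opprK subrK mulmxN -opprD -mulmxDl [b%:M + _]addrC subrK.
rewrite (@det_block_schur _ _ A A') // det_mx11 !(mulNmx, mulmxN, opprK).
rewrite mul_scalar_mx -!scalemxAl.
by rewrite !mxE eqxx !mulr1n.
Qed.

Lemma det_scalar_sub_conj n (Q A P : 'M[R]_n) (z : R) : Q *m P = 1%:M ->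
  \det (z%:M - Q *m A *m P) = \det (z%:M - A).
Proof.
move=> QP; have detQP : \det Q * \det P = 1 by rewrite -det_mulmx QP det1.
have -> : z%:M - Q *m A *m P = Q *m (z%:M - A) *m P.
  by rewrite mulmxBr mulmxBl mul_mx_scalar -scalemxAl QP scalemx1.
by rewrite !det_mulmx mulrAC detQP mul1r.
Qed.

End BlockDeterminants.

Section Adjoint.
Variable C : numClosedFieldType.

Lemma trmxC_mul m n p (A : 'M[C]_(m, n)) (B : 'M_(n, p)) : (A *m B)^t* = B^t* *m A^t*.
Proof. by rewrite trmx_mul map_mxM. Qed.

Lemma trmxC0 m n : (0 : 'M[C]_(m, n))^t* = 0.
Proof. by rewrite trmx0 map_mx0. Qed.

Lemma trmxC_scalar n (a : C) : (a%:M : 'M_n)^t* = a^*%:M.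
Proof. by rewrite tr_scalar_mx map_scalar_mx. Qed.

Lemma trmxC_col_mx m1 m2 n (A : 'M[C]_(m1, n)) (B : 'M_(m2, n)) :
  (col_mx A B)^t* = row_mx (A^t*) (B^t*).
Proof. by rewrite tr_col_mx map_row_mx. Qed.

Lemma trmxC_block_mx m1 m2 n1 n2 (A : 'M[C]_(m1, n1)) (B : 'M_(m1, n2))
    (D : 'M_(m2, n1)) (G : 'M_(m2, n2)) :
  (block_mx A B D G)^t* = block_mx (A^t*) (D^t*) (B^t*) (G^t*).
Proof. by rewrite tr_block_mx map_block_mx. Qed.

Lemma trmxC_mul_self_eq0 m (v : 'cV[C]_m) : v^t* *m v = 0 -> v = 0.
Proof.
move=> /matrixP /(_ 0 0); rewrite !mxE => vv0.
have norm2_sum0 : \sum_i `|v i 0| ^+ 2 = 0.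
  by rewrite -[RHS]vv0; apply: eq_bigr => j _; rewrite !mxE normCK mulrC.
have norm_v0 i : `|v i 0| ^+ 2 = 0.
  by apply: (psumr_eq0P _ norm2_sum0) => // j _; rewrite exprn_ge0.
by apply/matrixP => i j; rewrite (ord1 j) mxE; apply/eqP; rewrite -normr_eq0 -sqrf_eq0 norm_v0.
Qed.

Lemma trmxC_mul_unitary m (W : 'M[C]_m) (v : 'cV_m) : W \is unitarymx ->
  (W *m v)^t* *m (W *m v) = v^t* *m v.
Proof.
move=> /unitarymxP /mulmx1C WtW.
by rewrite trmxC_mul -mulmxA (mulmxA (W^t*)) WtW mul1mx.
Qed.

Lemma unitary_sub_rank1 m (W V : 'M[C]_m) (e : 'cV_m) :
  W \is unitarymx -> e^t* *m e = 1%:M -> e^t* *m V = e^t* ->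
  (forall v, exists c, (W - V) *m v = c *: ((W - 1%:M) *m e)) ->
  (((W *m e)^t* *m e) 0 0 - 1) *: (W - V) =
    (W - 1%:M) *m e *m (((W - 1%:M) *m e)^t* *m V).
Proof.
move=> W_unitary ee eV W_proj; set x := W *m e; set y := (W - 1%:M) *m e.
have xW : x^t* *m W = e^t*.
  by rewrite trmxC_mul -mulmxA (mulmx1C (unitarymxP W_unitary)) mulmx1.
have yx : y = x - e by rewrite /y mulmxBl mul1mx.
have xy : x^t* *m y = (1 - (x^t* *m e) 0 0)%:M.
  rewrite yx mulmxBr trmxC_mul_unitary // ee.
  by apply/matrixP => i j; rewrite !ord1 !mxE.
apply/trmx_inj/eqP/mulmxP => w; rewrite -[w]trmxK -!trmx_mul; congr trmx.
set v := w^T; have [c Wv] := W_proj v.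
(* Pairing with x turns the range condition into c (x^* e - 1) = y^* V v. *)
have yVv : y^t* *m (V *m v) = (c * ((x^t* *m e) 0 0 - 1))%:M.
  have : x^t* *m ((W - V) *m v) = - (y^t* *m (V *m v)).
    by rewrite yx !mulmxA mulmxBr xW linearB map_mxB !mulmxBl eV opprB.
  rewrite Wv -scalemxAr xy scale_scalar_mx => /(congr1 -%R); rewrite opprK => <-.
  by rewrite -raddfN /= -mulrN opprB.
by rewrite -scalemxAl Wv -!mulmxA yVv mul_mx_scalar scalerA mulrC scalemxAr.
Qed.

End Adjoint.

Section BorderedUnitary.
Variables (C : numClosedFieldType) (n : nat).
Variables (u F : 'M[C]_n) (W : 'M[C]_(n + 1)) (lam mu : 'I_n -> C) (nu : C).
Local Notation eN := (col_mx 0 1%:M : 'cV[C]_(n + 1)).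
Local Notation mu_col := (\col_k mu k : 'cV[C]_n).
Local Notation D := (diag_mx (\row_k lam k) : 'M[C]_n).
Local Notation E := (block_mx F 0 0 1%:M : 'M[C]_(n + 1)).
Hypothesis W_unitary : W \is unitarymx.
Hypothesis W_eN : W *m eN = col_mx (F *m mu_col) nu%:M.

Lemma trmxC_eN : eN^t* = row_mx 0 1%:M.
Proof. by rewrite trmxC_col_mx trmxC0 trmxC_scalar conjC1. Qed.

Lemma eN_unit : eN^t* *m eN = 1%:M.
Proof. by rewrite trmxC_eN mul_row_col mul0mx add0r mul1mx. Qed.

Lemma last_coord_neq1 : W *m eN != eN -> nu != 1.
Proof.
apply: contra => /eqP nu1; apply/eqP.
have Fmu_norm0 : (F *m mu_col)^t* *m (F *m mu_col) = 0.
  have := trmxC_mul_unitary eN W_unitary.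
  rewrite W_eN eN_unit trmxC_col_mx mul_row_col trmxC_scalar nu1 conjC1 mul1mx.
  by move/(canRL (addrK _)); rewrite subrr.
by rewrite W_eN (trmxC_mul_self_eq0 Fmu_norm0) nu1.
Qed.

Hypothesis W_proj : forall v, exists c,
  (W - block_mx u 0 0 1%:M) *m v = c *: ((W - 1%:M) *m eN).
Hypothesis F_orthonormal : F^t* *m F = 1%:M.
Hypothesis F_eigen : forall k, u *m col k F = lam k *: col k F.

Lemma trmxC_E : E^t* = block_mx (F^t*) 0 0 1%:M.
Proof. by rewrite trmxC_block_mx !trmxC0 trmxC_scalar conjC1. Qed.

Lemma E_orthonormal : E^t* *m E = 1%:M.
Proof.
rewrite trmxC_E mulmx_block !(mulmx0, mul0mx, mulmx1, addr0, add0r) F_orthonormal.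
by rewrite -scalar_mx_block.
Qed.

Lemma F_diagonalizes_u : F^t* *m u *m F = D.
Proof.
have uF : u *m F = F *m D.
  apply/matrixP => i j; rewrite mul_mx_diag !mxE mulrC.
  have := congr1 (fun v : 'cV_n => v i 0) (F_eigen j); rewrite !mxE => <-.
  by apply: eq_bigr => l _; rewrite !mxE.
by rewrite -mulmxA uF mulmxA F_orthonormal mul1mx.
Qed.

Local Notation y := (col_mx mu_col (nu - 1)%:M).

Lemma E_conj_W :
  (nu^* - 1) *: (E^t* *m W *m E - block_mx D 0 0 1%:M) =
    y *m (y^t* *m block_mx D 0 0 1%:M).
Proof.
have EuE : E^t* *m block_mx u 0 0 1%:M *m E = block_mx D 0 0 1%:M.
  rewrite trmxC_E !mulmx_block !(mulmx0, mul0mx, mulmx1, mul1mx, addr0, add0r).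
  by rewrite F_diagonalizes_u.
have eN_fixed : eN^t* *m block_mx u 0 0 1%:M = eN^t*.
  by rewrite trmxC_eN mul_row_block !(mulmx0, mul0mx, mulmx1, mul1mx, addr0, add0r).
have WeN_eN : ((W *m eN)^t* *m eN) 0 0 = nu^*.
  rewrite W_eN trmxC_col_mx mul_row_col mulmx0 add0r trmxC_scalar mulmx1.
  by rewrite mxE eqxx mulr1n.
have yE : (W - 1%:M) *m eN = E *m y.
  rewrite mulmxBl mul1mx W_eN mul_block_col !(mulmx0, mul0mx, mulmx1, mul1mx, addr0, add0r).
  by rewrite opp_col_mx add_col_mx subr0 raddfB.
have := unitary_sub_rank1 W_unitary eN_unit eN_fixed W_proj.
rewrite WeN_eN yE -EuE -mulmxBl -mulmxBr scalemxAl scalemxAr => ->.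
by rewrite trmxC_mul !mulmxA E_orthonormal mul1mx.
Qed.

Lemma det_sub_bordered_unitary z : nu != 1 -> (forall k, z != lam k) ->
  \det (z%:M - W) =
    \det (z%:M - u) / (nu^* - 1) *
    ((z - nu) * (nu^* - 1) - (z - 1) * \sum_k `|mu k| ^+ 2 * (lam k / (z - lam k))).
Proof.
move=> nu_neq1 z_neq_lam.
set k := nu^* - 1.
have k_neq0 : k != 0.
  by rewrite subr_eq0; apply: contra nu_neq1 => /eqP nuC1; rewrite -[nu]conjCK nuC1 conjC1.
pose r := k^-1 *: (mu_col^t* *m D).
have EWE : z%:M - E^t* *m W *m E =
    block_mx (z%:M - D) 0 0 (z - 1)%:M - col_mx mu_col (nu - 1)%:M *m row_mx r 1%:M.
  have yDD : k^-1 *: (y^t* *m block_mx D 0 0 1%:M) = row_mx r 1%:M.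
    rewrite trmxC_col_mx trmxC_scalar mul_row_block.
    rewrite !(mulmx0, mul0mx, mulmx1, addr0, add0r) scale_row_mx scale_scalar_mx.
    by rewrite rmorphB rmorph1 mulVf.
  have -> : E^t* *m W *m E = block_mx D 0 0 1%:M + y *m row_mx r 1%:M.
    by rewrite -yDD -scalemxAr -E_conj_W scalerA mulVf // scale1r addrC subrK.
  rewrite (scalar_mx_block n 1 z) opprD addrA opp_block_mx add_block_mx.
  by rewrite !(subr0, oppr0, addr0) -raddfB.
pose Zi := diag_mx (\row_l (z - lam l)^-1).
have ZZi : (z%:M - D) *m Zi = 1%:M.
  apply/matrixP => i j; rewrite mul_mx_diag !mxE.
  have [->|nij] := eqVneq i j; rewrite ?mulr1n ?mulr0n ?subr0 ?mul0r //.
  by rewrite mulfV // subr_eq0.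
rewrite -(det_scalar_sub_conj W z E_orthonormal) EWE (det_block_diag_sub_rank1 _ _ _ _ ZZi).
rewrite -(det_scalar_sub_conj u z F_orthonormal) F_diagonalizes_u.
have -> : (r *m Zi *m mu_col) 0 0 = k^-1 * \sum_l `|mu l| ^+ 2 * (lam l / (z - lam l)).
  rewrite mxE mulr_sumr; apply: eq_bigr => l _.
  by rewrite /r /Zi !mul_mx_diag !mxE normCK; ring.
by field.
Qed.

End BorderedUnitary.

Lemma evec_ord_max (R : nzRingType) n :
  evec ord_max = castmx (addn1 n, erefl 1%N) (col_mx (0 : 'cV[R]_n) 1%:M).
Proof.
apply/matrixP => i j; rewrite castmxE !mxE (ord1 j) andbT.
case: splitP => k /= ik; rewrite !mxE.
  suff /negbTE-> : i != ord_max by [].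
  by apply: contraTneq (ltn_ord k) => i_max; rewrite -ik i_max ltnn.
suff -> : i == ord_max by rewrite (ord1 k).
by apply/eqP/val_inj; rewrite /= ik (ord1 k) addn0.
Qed.

Lemma sum_scale_col_mx0 (R : comPzRingType) m n p (F : 'M[R]_(m, n)) (a : 'I_n -> R) :
  \sum_k a k *: col_mx (col k F) (0 : 'M_(p, 1)) = col_mx (F *m \col_k a k) 0.
Proof.
have -> : F *m \col_k a k = \sum_k a k *: col k F.
  apply/matrixP => i j; rewrite (ord1 j) summxE !mxE.
  by apply: eq_bigr => k _; rewrite !mxE mulrC.
elim/big_rec2: _ => [|k A B _ ->]; first by rewrite col_mx0.
by rewrite scale_col_mx scaler0 add_col_mx addr0.
Qed.

Theorem proposition4p4 (R : realType) (u : forall n : nat, 'M[Cx R]_n)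
    (Hu : virtual_isometry u) (n : nat) (Hn : (0 < n)%N)
    (F : 'M[Cx R]_n) (lam : 'I_n -> Cx R) (mu : 'I_n -> Cx R) (nu : Cx R) :
  F^t* *m F = 1%:M ->
  (forall k : 'I_n, u n *m col k F = lam k *: col k F) ->
  u n.+1 *m evec ord_max = \sum_(k < n) mu k *: extv (col k F) + nu *: evec ord_max ->
  u n.+1 *m evec ord_max != evec ord_max ->
  nu != 1 /\
  forall z : Cx R, (forall k : 'I_n, z != lam k) ->
    \det (z%:M - u n.+1) =
      \det (z%:M - u n) / (nu^* - 1) *
      ((z - nu) * (nu^* - 1)
       - (z - 1) * \sum_(k < n) `|mu k| ^+ 2 * (lam k / (z - lam k))).
Proof.
move=> F_orthonormal F_eigen.
case: Hu => u_unitary u_proj; move: (u_unitary n.+1 isT) (u_proj n Hn).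
rewrite /proj_succ_is /extm /extv evec_ord_max.
(* Identify n.+1 with n + 1, turning the casts into plain block matrices. *)
move: (u n.+1); case: _.+1 / (addn1 n) => W; rewrite !castmx_id => W_unitary W_proj.
under eq_bigr do rewrite castmx_id.
rewrite sum_scale_col_mx0 scale_col_mx scaler0 scalemx1 add_col_mx addr0 add0r.
move=> W_eN /(last_coord_neq1 W_unitary W_eN) nu_neq1; split=> // z.
exact: det_sub_bordered_unitary W_unitary W_eN W_proj F_orthonormal F_eigen z nu_neq1.
Qed.
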